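(* For all bases $\Gamma$, name contexts $\Delta$, names $\alpha,\beta$, terms $M$ and $\kappa,\kappa'\in\Lambda_C$: (1) if $\Gamma\vdash M:\kappa\to\psi\mid\alpha{:}\kappa,\Delta$ is derivable, then $\Gamma\vdash\mu\alpha.[\alpha]M:\kappa\to\psi\mid\Delta$ is derivable; (2) if $\Gamma\vdash M:\kappa'\to\psi\mid\alpha{:}\kappa,\beta{:}\kappa',\Delta$ is derivable, then $\Gamma\vdash\mu\alpha.[\beta]M:\kappa\to\psi\mid\beta{:}\kappa',\Delta$ is derivable. The same holds in the restricted system $\vdash_r$ (with all types, bases and contexts restricted).
   Context: $\lambda\mu$ terms and commands: $M::=x\mid\lambda x.M\mid MN\mid\mu\alpha.\mathsf C$ and $\mathsf C::=[\alpha]M$. Types. $R=\{\bot\sqsubset\top\}$ and $\psi=\psi_\top$. - $\Lambda_R$: $\rho::=\psi_a\mid\omega\mid\rho\wedge\rho$; - $\Lambda_D$: $\delta::=\rho\mid\kappa\to\rho\mid\omega\mid\delta\wedge\delta$; - $\Lambda_C$: $\kappa::=\delta\times\kappa\mid\omega\mid\kappa\wedge\kappa$. The relations $\le_R,\le_D,\le_C$ are the least reflexive, transitive relations with $\sigma\wedge\tau\le\sigma,\tau$, $\sigma\le\omega$, $\rho\le\sigma,\tau\Rightarrow\rho\le\sigma\wedge\tau$, and additionally: - $\psi_\bot\sim\omega$ and $\psi_{a\sqcup b}\sim\psi_a\wedge\psi_b$; - $\le_R\subseteq\le_D$; - $\omega\le_D\omega\to\omega$; - $\psi_a\le_D\omega\to\psi_a\le_D\psi_a$;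 - $\omega\le_C\omega\times\omega$; - $(\kappa\to\rho_1)\wedge(\kappa\to\rho_2)\le_D\kappa\to(\rho_1\wedge\rho_2)$; - $(\delta_1\times\kappa_1)\wedge(\delta_2\times\kappa_2)\le_C(\delta_1\wedge\delta_2)\times(\kappa_1\wedge\kappa_2)$; - $\to$ is contravariant in $\Lambda_C$ and covariant in $\Lambda_R$; - $\times$ is covariant in both arguments. Type assignment. Bases $\Gamma$ are finite maps from variables to $\Lambda_D$, and contexts $\Delta$ are finite maps from names to $\Lambda_C$. $\Gamma(x)$ and $\Delta(\alpha)$ are $\omega$ outside the domain. $\alpha{:}\kappa,\Delta$ is $\Delta\cup\{\alpha{:}\kappa\}$ (requiring $\alpha\notin\mathrm{dom}\Delta$ or $\alpha{:}\kappa\in\Delta$). The rules are: - (Ax) $\Gamma,x{:}\delta\vdash x:\delta\mid\Delta$. - (Abs) From $\Gamma\vdash M:\kappa\to\rho\mid\Delta$, $\Gamma(x)=\delta$, infer $\Gamma\setminus x\vdash\lambda x.M:(\delta\times\kappa)\to\rho\mid\Delta$. - (App) From $\Gamma\vdash M:(\delta\times\kappa)\to\rho\mid\Delta$ and $\Gamma\vdash N:\delta\mid\Delta$, infer $\Gamma\vdash MN:\kappa\to\rho\mid\Delta$. - (Cmd) From $\Gamma\vdash M:\delta\mid\Delta$, $\Delta(\alpha)=\kappa$, infer $\Gamma\vdash[\alpha]M:\delta\times\kappa\mid\Delta$. - ($\mu$) From $\Gamma\vdash\mathsf C:(\kappa'\to\rho)\times\kappa'\mid\Delta$, $\Delta(\alpha)=\kappa$,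 infer $\Gamma\vdash\mu\alpha.\mathsf C:\kappa\to\rho\mid\Delta\setminus\alpha$. - ($\wedge$), ($\omega$) and ($\le$). Restricted system. $\Lambda^r_D$: $\delta::=\kappa\to\psi\mid\delta\wedge\delta$; $\Lambda^r_C$: $\kappa::=\omega\mid\delta\times\kappa\mid\kappa\wedge\kappa$. $\vdash_r$ denotes derivability without ($\omega$), with every judgement having a basis valued in $\Lambda^r_D$, a context valued in $\Lambda^r_C$, and a predicate in $\Lambda^r_D\cup\Lambda^r_C$. *)

From Stdlib Require Import Arith.

Definition var := nat.
Definition name := nat.

Inductive term : Type :=
| Var : var -> term
| Lam : var -> term -> term
| App : term -> term -> term
| Mu  : name -> cmd -> term
with cmd : Type :=
| Cmd : name -> term -> cmd.

(* R = {bot [= top}, encoded by bool (false = bot, true = top); a |_| b = a || b *)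
Inductive rty : Type :=
| Psi  : bool -> rty
| OmR  : rty
| AndR : rty -> rty -> rty.

(* Lambda_D and Lambda_C (mutually).  Lambda_R is included in Lambda_D via DR;
   the omega of Lambda_D is the omega of Lambda_R (DR OmR). *)
Inductive dty : Type :=
| DR   : rty -> dty
| Arr  : cty -> rty -> dty
| AndD : dty -> dty -> dty
with cty : Type :=
| Pair : dty -> cty -> cty
| OmC  : cty
| AndC : cty -> cty -> cty.

Definition OmD : dty := DR OmR.
Definition psi : rty := Psi true.

Inductive leR : rty -> rty -> Prop :=
| leR_refl : forall s, leR s s
| leR_trans : forall s t u, leR s t -> leR t u -> leR s u
| leR_andl : forall s t, leR (AndR s t) s
| leR_andr : forall s t, leR (AndR s t) t
| leR_om : forall s, leR s OmR
| leR_glb : forall r s t, leR r s -> leR r t -> leR r (AndR s t)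
| leR_botom : leR (Psi false) OmR
| leR_ombot : leR OmR (Psi false)
| leR_join1 : forall a b, leR (Psi (orb a b)) (AndR (Psi a) (Psi b))
| leR_join2 : forall a b, leR (AndR (Psi a) (Psi b)) (Psi (orb a b)).

Inductive leD : dty -> dty -> Prop :=
| leD_refl : forall s, leD s s
| leD_trans : forall s t u, leD s t -> leD t u -> leD s u
| leD_andl : forall s t, leD (AndD s t) s
| leD_andr : forall s t, leD (AndD s t) t
| leD_om : forall s, leD s OmD
| leD_glb : forall r s t, leD r s -> leD r t -> leD r (AndD s t)
| leD_R : forall r s, leR r s -> leD (DR r) (DR s)
| leD_omarr : leD OmD (Arr OmC OmR)
| leD_psiarr : forall a, leD (DR (Psi a)) (Arr OmC (Psi a))
| leD_arrpsi : forall a, leD (Arr OmC (Psi a)) (DR (Psi a))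
| leD_arrand : forall k r1 r2, leD (AndD (Arr k r1) (Arr k r2)) (Arr k (AndR r1 r2))
| leD_arr : forall k k' r r', leC k' k -> leR r r' -> leD (Arr k r) (Arr k' r')
with leC : cty -> cty -> Prop :=
| leC_refl : forall s, leC s s
| leC_trans : forall s t u, leC s t -> leC t u -> leC s u
| leC_andl : forall s t, leC (AndC s t) s
| leC_andr : forall s t, leC (AndC s t) t
| leC_om : forall s, leC s OmC
| leC_glb : forall r s t, leC r s -> leC r t -> leC r (AndC s t)
| leC_ompair : leC OmC (Pair OmD OmC)
| leC_pairand : forall d1 d2 k1 k2,
    leC (AndC (Pair d1 k1) (Pair d2 k2)) (Pair (AndD d1 d2) (AndC k1 k2))
| leC_pair : forall d d' k k', leD d d' -> leC k k' -> leC (Pair d k) (Pair d' k').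

(* Bases and contexts: finite maps, represented as option-valued functions
   (None = outside the domain) that are required to have finite domain. *)
Definition basis := var -> option dty.
Definition context := name -> option cty.

Definition finite_dom {T : Type} (f : nat -> option T) : Prop :=
  exists n, forall x, n <= x -> f x = None.

Definition bget (G : basis) (x : var) : dty :=
  match G x with Some d => d | None => OmD end.
Definition cget (D : context) (a : name) : cty :=
  match D a with Some k => k | None => OmC end.

Definition upd {T : Type} (f : nat -> option T) (x : nat) (v : option T) : nat -> option T :=
  fun y => if Nat.eqb y x then v else f y.

Definition cext (D : context) (a : name) (k : cty) : context := upd D a (Some k).
Definition cdel (D : context) (a : name) : context := upd D a None.
Definition bdel (G : basis) (x : var) : basis := upd G x None.

Inductive typ : basis -> term -> dty -> context -> Prop :=
| T_Ax : forall G D x d, G x = Some d -> typ G (Var x) d D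
| T_Abs : forall G D x M k r,
    typ G M (Arr k r) D -> typ (bdel G x) (Lam x M) (Arr (Pair (bget G x) k) r) D
| T_App : forall G D M N d k r,
    typ G M (Arr (Pair d k) r) D -> typ G N d D -> typ G (App M N) (Arr k r) D
| T_Mu : forall G D a C k' r,
    typc G C (Pair (Arr k' r) k') D -> typ G (Mu a C) (Arr (cget D a) r) (cdel D a)
| T_And : forall G D M s t, typ G M s D -> typ G M t D -> typ G M (AndD s t) D
| T_Om : forall G D M, typ G M OmD D
| T_Le : forall G D M s t, typ G M s D -> leD s t -> typ G M t D
with typc : basis -> cmd -> cty -> context -> Prop :=
| C_Cmd : forall G D a M d, typ G M d D -> typc G (Cmd a M) (Pair d (cget D a)) D
| C_And : forall G D C s t, typc G C s D -> typc G C t D -> typc G C (AndC s t) D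
| C_Om : forall G D C, typc G C OmC D
| C_Le : forall G D C s t, typc G C s D -> leC s t -> typc G C t D.

Fixpoint rD (d : dty) : Prop :=
  match d with
  | DR _ => False
  | Arr k r => rC k /\ r = psi
  | AndD d1 d2 => rD d1 /\ rD d2
  end
with rC (k : cty) : Prop :=
  match k with
  | Pair d k' => rD d /\ rC k'
  | OmC => True
  | AndC k1 k2 => rC k1 /\ rC k2
  end.

Definition rbasis (G : basis) : Prop := forall x d, G x = Some d -> rD d.
Definition rcontext (D : context) : Prop := forall a k, D a = Some k -> rC k.

Inductive rtyp : basis -> term -> dty -> context -> Prop :=
| RT_Ax : forall G D x d,
    rbasis G -> rcontext D -> rD d ->
    G x = Some d -> rtyp G (Var x) d D
| RT_Abs : forall G D x M k r,
    rbasis (bdel G x) -> rcontext D -> rD (Arr (Pair (bget G x) k) r) ->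
    rtyp G M (Arr k r) D -> rtyp (bdel G x) (Lam x M) (Arr (Pair (bget G x) k) r) D
| RT_App : forall G D M N d k r,
    rbasis G -> rcontext D -> rD (Arr k r) ->
    rtyp G M (Arr (Pair d k) r) D -> rtyp G N d D -> rtyp G (App M N) (Arr k r) D
| RT_Mu : forall G D a C k' r,
    rbasis G -> rcontext (cdel D a) -> rD (Arr (cget D a) r) ->
    rtypc G C (Pair (Arr k' r) k') D -> rtyp G (Mu a C) (Arr (cget D a) r) (cdel D a)
| RT_And : forall G D M s t,
    rbasis G -> rcontext D -> rD (AndD s t) ->
    rtyp G M s D -> rtyp G M t D -> rtyp G M (AndD s t) D
| RT_Le : forall G D M s t,
    rbasis G -> rcontext D -> rD t ->
    rtyp G M s D -> leD s t -> rtyp G M t D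
with rtypc : basis -> cmd -> cty -> context -> Prop :=
| RC_Cmd : forall G D a M d,
    rbasis G -> rcontext D -> rC (Pair d (cget D a)) ->
    rtyp G M d D -> rtypc G (Cmd a M) (Pair d (cget D a)) D
| RC_And : forall G D C s t,
    rbasis G -> rcontext D -> rC (AndC s t) ->
    rtypc G C s D -> rtypc G C t D -> rtypc G C (AndC s t) D
| RC_Le : forall G D C s t,
    rbasis G -> rcontext D -> rC t ->
    rtypc G C s D -> leC s t -> rtypc G C t D.

(* Each item is one instance of (Cmd) followed by (mu).  Since a is fresh for
   Delta, deleting a from the context a:kappa, Delta used by (mu) gives back
   Delta; in the restricted system the side conditions hold because every
   lookup in a restricted context, including the default omega, is restricted. *)
From Stdlib Require Import FunctionalExtensionality PeanoNat.

Lemma cext_neq D a b k : a <> b -> cext D b k a = D a.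
Proof. intro Hab. unfold cext, upd. now rewrite (proj2 (Nat.eqb_neq a b) Hab). Qed.

Lemma cget_cext_eq D a k : cget (cext D a k) a = k.
Proof. unfold cget, cext, upd. now rewrite Nat.eqb_refl. Qed.

Lemma cget_cext_neq D a b k : a <> b -> cget (cext D b k) a = cget D a.
Proof. intro Hab. unfold cget. now rewrite cext_neq. Qed.

Lemma cdel_cext D a k : D a = None -> cdel (cext D a k) a = D.
Proof.
  intro Ha. apply functional_extensionality. intro y. unfold cdel, cext, upd.
  destruct (Nat.eqb_spec y a); congruence.
Qed.

Lemma rcontext_cext D a k : rcontext D -> rC k -> rcontext (cext D a k).
Proof.
  intros HD Hk b k0. unfold cext, upd. destruct (Nat.eqb b a).
  - congruence.
  - apply HD.
Qed.

Lemma rcontext_cdel D a : rcontext D -> rcontext (cdel D a).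
Proof.
  intros HD b k0. unfold cdel, upd. destruct (Nat.eqb b a).
  - discriminate.
  - apply HD.
Qed.

Lemma rC_cget D a : rcontext D -> rC (cget D a).
Proof. intro HD. unfold cget. destruct (D a) eqn:E; simpl; eauto. Qed.

Lemma typ_mu_cmd G D a b M r :
  typ G M (Arr (cget D b) r) D ->
  typ G (Mu a (Cmd b M)) (Arr (cget D a) r) (cdel D a).
Proof. intro HM. exact (T_Mu _ _ a _ _ _ (C_Cmd _ _ b _ _ HM)). Qed.

Lemma rtyp_mu_cmd G D a b M :
  rbasis G -> rcontext D ->
  rtyp G M (Arr (cget D b) psi) D ->
  rtyp G (Mu a (Cmd b M)) (Arr (cget D a) psi) (cdel D a).
Proof.
  intros HG HD HM.
  apply RT_Mu with (k' := cget D b).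
  - exact HG.
  - now apply rcontext_cdel.
  - split; [now apply rC_cget | reflexivity].
  - apply RC_Cmd; try assumption.
    split; [split; [now apply rC_cget | reflexivity] | now apply rC_cget].
Qed.

Theorem lemma7p2 :
  (* (1), full system *)
  (forall (G : basis) (D : context) (a : name) (M : term) (k : cty),
      finite_dom G -> finite_dom D -> D a = None ->
      typ G M (Arr k psi) (cext D a k) ->
      typ G (Mu a (Cmd a M)) (Arr k psi) D)
  /\
  (* (2), full system *)
  (forall (G : basis) (D : context) (a b : name) (M : term) (k k' : cty),
      finite_dom G -> finite_dom D -> a <> b -> D a = None ->
      (D b = None \/ D b = Some k') ->
      typ G M (Arr k' psi) (cext (cext D b k') a k) ->
      typ G (Mu a (Cmd b M)) (Arr k psi) (cext D b k'))
  /\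
  (* (1), restricted system *)
  (forall (G : basis) (D : context) (a : name) (M : term) (k : cty),
      finite_dom G -> finite_dom D -> D a = None ->
      rbasis G -> rcontext D -> rC k ->
      rtyp G M (Arr k psi) (cext D a k) ->
      rtyp G (Mu a (Cmd a M)) (Arr k psi) D)
  /\
  (* (2), restricted system *)
  (forall (G : basis) (D : context) (a b : name) (M : term) (k k' : cty),
      finite_dom G -> finite_dom D -> a <> b -> D a = None ->
      (D b = None \/ D b = Some k') ->
      rbasis G -> rcontext D -> rC k -> rC k' ->
      rtyp G M (Arr k' psi) (cext (cext D b k') a k) ->
      rtyp G (Mu a (Cmd b M)) (Arr k psi) (cext D b k')).
Proof.
  split; [|split; [|split]].
  - intros G D a M k _ _ Ha HM.
    pose proof (typ_mu_cmd G (cext D a k) a a M psi) as H.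
    rewrite cget_cext_eq, cdel_cext in H; auto.
  - intros G D a b M k k' _ _ Hab Ha _ HM.
    pose proof (typ_mu_cmd G (cext (cext D b k') a k) a b M psi) as H.
    rewrite cget_cext_eq, cget_cext_neq, cget_cext_eq, cdel_cext in H; auto.
    now rewrite cext_neq.
  - intros G D a M k _ _ Ha HG HD Hk HM.
    pose proof (rtyp_mu_cmd G (cext D a k) a a M HG) as H.
    rewrite cget_cext_eq, cdel_cext in H; auto using rcontext_cext.
  - intros G D a b M k k' _ _ Hab Ha _ HG HD Hk Hk' HM.
    pose proof (rtyp_mu_cmd G (cext (cext D b k') a k) a b M HG) as H.
    rewrite cget_cext_eq, cget_cext_neq, cget_cext_eq, cdel_cext in H;
      auto using rcontext_cext.
    now rewrite cext_neq.
Qed.
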